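(* Let $\alpha\ge1$. Let $c$ and $h$ be two decision trees on $n$ propositional variables with at most $m$ nodes in total for both trees, let $D$ be an $\alpha$-log-Lipschitz distribution on $\{0,1\}^n$, and let $\rho=\log n$. There is a fixed polynomial $\mathrm{poly}(\cdot,\cdot,\cdot)$ (depending only on $\alpha$) such that for all $0<\varepsilon<\frac12$, if $\Pr_{x\sim D}[h(x)\ne c(x)]<\mathrm{poly}(\frac1m,\frac1n,\varepsilon)$, then $\mathsf{R}_\rho(c,h)<\varepsilon$.
   Context: A decision tree over $n$ propositional variables is a finite binary tree whose internal nodes are labelled by elements of $\{1,\dots,n\}$ and whose leaves are labelled $0$ or $1$; an input $x\in\{0,1\}^n$ determines a root-to-leaf path by descending to the left child at a node labelled $i$ if $x_i=0$ and to the right child if $x_i=1$, and the tree's output is the label of the reached leaf. A distribution $D$ on $\{0,1\}^n$ is $\alpha$-log-Lipschitz if $|\log D(x)-\log D(x')|\le\log\alpha$ whenever $x,x'$ differ in exactly one bit. Robust risk: $\mathsf{R}_\rho(c,h)=\Pr_{x\sim D}[\exists z\in B_\rho(x):c(z)\ne h(z)]$, where $B_\rho(x)$ is the Hamming ball of radius $\rho$ around $x$. *)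

From HB Require Import structures.
From mathcomp Require Import all_boot all_order all_algebra.
From mathcomp Require Import all_classical all_reals all_analysis.
Set Implicit Arguments. Unset Strict Implicit. Unset Printing Implicit Defensive.
Import Order.TTheory GRing.Theory Num.Theory.
Local Open Scope ring_scope.

Notation cube n := {ffun 'I_n -> bool}.

Inductive dtree (n : nat) : Type :=
| DLeaf of bool
| DNode of 'I_n & dtree n & dtree n.

Arguments DLeaf {n}.

Fixpoint dt_eval n (t : dtree n) (x : cube n) : bool :=
  match t with
  | DLeaf b => b
  | DNode i l r => if x i then dt_eval r x else dt_eval l x
  end.

Fixpoint dt_size n (t : dtree n) : nat :=
  match t with
  | DLeaf _ => 1
  | DNode _ l r => (dt_size l + dt_size r).+1
  end.

Definition hamming n (x z : cube n) : nat := #|[set i | x i != z i]|.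

Definition is_distr (R : realType) n (D : cube n -> R) : Prop :=
  (forall x, 0 <= D x) /\ \sum_(x : cube n) D x = 1.

Definition prob (R : realType) n (D : cube n -> R) (E : pred (cube n)) : R :=
  \sum_(x : cube n | E x) D x.

(* alpha-log-Lipschitz (log requires D > 0 everywhere). *)
Definition log_lipschitz (R : realType) n (alpha : R) (D : cube n -> R) : Prop :=
  (forall x, 0 < D x) /\
  forall x x' : cube n, hamming x x' = 1%N ->
    `|ln (D x) - ln (D x')| <= ln alpha.

Definition robust_risk (R : realType) n (D : cube n -> R) (rho : R)
    (c h : dtree n) : R :=
  prob D [pred x | [exists z : cube n,
                     ((hamming x z)%:R <= rho) && (dt_eval c z != dt_eval h z)]].

Definition poly3 (R : realType) (d : nat) (a : {ffun 'I_d * 'I_d * 'I_d -> R})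
    (x y z : R) : R :=
  \sum_(t : 'I_d * 'I_d * 'I_d) a t * x ^+ t.1.1 * y ^+ t.1.2 * z ^+ t.2.

Definition log2 (R : realType) (x : R) : R := ln x / ln 2.

From HB Require Import structures.
From mathcomp Require Import all_boot all_order all_algebra.
From mathcomp Require Import all_classical all_reals all_analysis.
From mathcomp Require Import ring lra.
Import Order.TTheory GRing.Theory Num.Theory.
Local Open Scope ring_scope.
Set Implicit Arguments. Unset Strict Implicit. Unset Printing Implicit Defensive.

(* Taken in pairs, the root-to-leaf paths of c and h cut the cube into at most
   m^2 subcubes; on those whose two leaves disagree, c <> h.  Let such a subcube
   fix a set K of k coordinates.  Pairing each x with its flip at a coordinate
   of K and using D x <= alpha D x' for neighbours, the generating function
   E[t^(number of coordinates of K on which x leaves the subcube)] lies between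
   ((1 + alpha t)/(1 + alpha))^k and ((alpha + t)/(1 + alpha))^k.  At t = 0:
   the subcube, hence Pr[h <> c], has probability at least (1 + alpha)^-k.
   At t = 1/2: a point within distance log2 n of the subcube has
   1 <= n 2^-(mismatches), so the Hamming neighbourhood has probability at most
   n ((alpha + 1/2)/(1 + alpha))^k.  Choosing M with
   ((alpha + 1/2)/(1 + alpha))^M <= (1 + alpha)^-1, an error below theta^M
   bounds every neighbourhood by n theta, and theta = eps / (m^2 n) makes the
   union bound over the m^2 subcubes give eps. *)

Lemma exists_expr_le (R : realType) (u c : R) :
  0 <= u < 1 -> 0 < c -> exists M, u ^+ M <= c.
Proof.
move=> /andP[u_ge0 u_lt1] c_gt0; have normu_lt1 : `|u| < 1 by rewrite ger0_norm.
have /cvgr0_norm_le/(_ c c_gt0) [N _ uN_le] := cvg_expr normu_lt1.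
by exists N; have := uN_le N (leqnn N); rewrite /= ger0_norm ?exprn_ge0.
Qed.

Lemma sumr_lt_size (R : numDomainType) (I : eqType) (s : seq I) (F : I -> R) b :
  (0 < size s)%N -> {in s, forall i, F i < b} -> \sum_(i <- s) F i < (size s)%:R * b.
Proof.
move=> s_gt0 F_lt.
have -> : (size s)%:R * b = \sum_(i <- s | i \in s) b.
  by rewrite -big_seq big_const_seq count_predT iter_addr_0 mulr_natl.
rewrite big_seq; apply: ltr_sum => //.
by case: s s_gt0 {F_lt} => // i s' _; rewrite /= mem_head.
Qed.

Lemma poly3_monomial (R : realType) d (t0 : 'I_d * 'I_d * 'I_d) (x y z : R) :
  poly3 [ffun t => (t == t0)%:R] x y z = x ^+ t0.1.1 * y ^+ t0.1.2 * z ^+ t0.2.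
Proof.
rewrite /poly3 (bigD1 t0) //= big1 => [|t /negbTE t_neq]; last first.
  by rewrite ffunE t_neq !mul0r.
by rewrite ffunE eqxx mul1r addr0.
Qed.

Lemma pair_mix_bounds (R : realFieldType) (alpha a b t : R) :
  1 <= alpha -> 0 <= a -> 0 <= b -> a <= alpha * b -> b <= alpha * a -> 0 <= t <= 1 ->
  (1 + alpha * t) / (1 + alpha) * (a + b) <= a + t * b
    <= (alpha + t) / (1 + alpha) * (a + b).
Proof.
move=> alpha_ge1 a_ge0 b_ge0 ab ba /andP[t_ge0 t_le1].
have alpha1_gt0 : 0 < 1 + alpha by lra.
have h1 : 0 <= (1 - t) * (alpha * b - a) by apply: mulr_ge0; lra.
have h2 : 0 <= (1 - t) * (alpha * a - b) by apply: mulr_ge0; lra.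
rewrite mulrAC ler_pdivrMr // mulrAC ler_pdivlMr //.
by apply/andP; split; nra.
Qed.

Lemma pow2_le_of_le_log2 (R : realType) (k : nat) (N : R) :
  0 < N -> k%:R <= log2 N -> 2 ^+ k <= N.
Proof.
move=> N_gt0; rewrite /log2 ler_pdivlMr; last by rewrite ln_gt0 // ltr1n.
by rewrite mulr_natl => k_le; rewrite -ler_ln ?posrE ?exprn_gt0 // lnXn ?ltr0n.
Qed.

Section Cube.
Variable n : nat.
Implicit Types (i j : 'I_n) (v x z : cube n) (s : seq 'I_n) (pi : seq ('I_n * bool)).

Definition flip i x : cube n := [ffun j => if j == i then ~~ x j else x j].

Lemma flipK i : involutive (flip i).
Proof. by move=> x; apply/ffunP => j; rewrite !ffunE; case: eqP => // _; rewrite negbK. Qed.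

Lemma flip_at i x : flip i x i = ~~ x i.
Proof. by rewrite ffunE eqxx. Qed.

Lemma flip_neq i j x : j != i -> flip i x j = x j.
Proof. by rewrite ffunE => /negbTE ->. Qed.

Lemma hamming_flip i x : hamming x (flip i x) = 1%N.
Proof.
rewrite /hamming (_ : [set j | x j != flip i x j] = [set i]) ?cards1 //.
by apply/setP => j; rewrite !inE ffunE; case: (j == i); [case: (x j) | rewrite eqxx].
Qed.

Lemma sum_flip_pairs (V : nmodType) (F : cube n -> V) i (b : bool) :
  \sum_x F x = \sum_(x : cube n | x i == b) (F x + F (flip i x)).
Proof.
rewrite (bigID (fun x : cube n => x i == b)) /= big_split /=; congr (_ + _).
rewrite (reindex_inj (inv_inj (flipK i))) /=; apply: eq_bigl => x.
by rewrite flip_at; case: (x i); case: b.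
Qed.

Definition mismatch v x s := count (fun i => x i != v i) s.

Lemma mismatch_flip i v x s : i \notin s -> mismatch v (flip i x) s = mismatch v x s.
Proof.
move=> i_notin; apply: eq_in_count => j j_in; rewrite flip_neq //.
by apply: contraNneq i_notin => <-.
Qed.

Lemma mismatch_le_hamming v x s : uniq s -> (mismatch v x s <= hamming x v)%N.
Proof.
move=> s_uniq; rewrite /mismatch -size_filter /hamming cardE.
apply: uniq_leq_size => [|j]; first exact: filter_uniq.
by rewrite mem_filter mem_enum inE => /andP[].
Qed.

Lemma mismatch_eq0 v x s :
  (mismatch v x s == 0%N) = all (fun i => x i == v i) s.
Proof.
rewrite /mismatch -leqn0 leqNgt -has_count -all_predC.
by apply: eq_all => i /=; rewrite negbK.
Qed.

Lemma mismatch_rebase v z x s :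
  mismatch v z s = 0%N -> mismatch v x s = mismatch z x s.
Proof.
by move=> /eqP; rewrite mismatch_eq0 => /allP vz; apply: eq_in_count => j /vz /eqP ->.
Qed.

Definition sat pi x := all (fun l => x l.1 == l.2) pi.

Definition lit_vars pi := undup (map fst pi).

Lemma sat_mismatch pi z x : sat pi z -> sat pi x = (mismatch z x (lit_vars pi) == 0%N).
Proof.
move=> /allP z_sat; rewrite mismatch_eq0 (eq_all_r (mem_undup _)) all_map.
by apply: eq_in_all => l /z_sat /eqP /= ->.
Qed.

Definition hamming_nbhd (R : realType) (A : pred (cube n)) (rho : R) : pred (cube n) :=
  [pred x | [exists z, A z && ((hamming x z)%:R <= rho)]].

End Cube.

Fixpoint dt_paths n (t : dtree n) : seq (seq ('I_n * bool) * bool) :=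
  match t with
  | DLeaf b => [:: ([::], b)]
  | DNode i l r => [seq ((i, false) :: p.1, p.2) | p <- dt_paths l]
                ++ [seq ((i, true) :: p.1, p.2) | p <- dt_paths r]
  end.

Lemma dt_paths_sound n (t : dtree n) p x :
  p \in dt_paths t -> sat p.1 x -> dt_eval t x = p.2.
Proof.
elim: t p => [b|i l IHl r IHr] p /=; first by rewrite inE => /eqP ->.
by rewrite mem_cat => /orP[] /mapP[q q_in ->] /= /andP[/eqP -> q_sat];
  [exact: IHl | exact: IHr].
Qed.

Lemma dt_paths_complete n (t : dtree n) x : exists2 p, p \in dt_paths t & sat p.1 x.
Proof.
elim: t => [b|i l [p pl p_sat] r [q qr q_sat]] /=; first by exists ([::], b); rewrite ?inE.
case xi: (x i).
  exists ((i, true) :: q.1, q.2); last by rewrite /sat /= xi eqxx.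
  by rewrite mem_cat map_f ?orbT.
exists ((i, false) :: p.1, p.2); last by rewrite /sat /= xi eqxx.
by rewrite mem_cat map_f.
Qed.

Lemma size_dt_paths n (t : dtree n) : (0 < size (dt_paths t) <= dt_size t)%N.
Proof.
elim: t => [b|i l /andP[l_gt0 l_le] r /andP[_ r_le]] //=.
by rewrite size_cat !size_map addn_gt0 l_gt0 leqW // leq_add.
Qed.

Section Probability.
Variables (R : realType) (n : nat) (D : cube n -> R).
Hypothesis D_ge0 : forall x, 0 <= D x.

Lemma probE (E : pred (cube n)) : prob D E = \sum_x (E x)%:R * D x.
Proof. by rewrite /prob big_mkcond; apply: eq_bigr => x _; case: (E x); rewrite ?mul1r ?mul0r. Qed.

Lemma le_prob (E F : pred (cube n)) : (forall x, E x -> F x) -> prob D E <= prob D F.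
Proof.
move=> EF; rewrite !probE; apply: ler_sum => x _; apply: ler_wpM2r => //.
by case Ex: (E x); rewrite ?(EF x Ex) ?ler0n.
Qed.

Lemma prob_le_sum (I : eqType) (s : seq I) (E : pred (cube n)) (F : I -> pred (cube n)) :
  (forall x, E x -> has (F^~ x) s) -> prob D E <= \sum_(q <- s) prob D (F q).
Proof.
move=> E_cover; rewrite probE (eq_bigr _ (fun q _ => probE (F q))) exchange_big /=.
apply: ler_sum => x _; rewrite -mulr_suml ler_wpM2r //.
case Ex: (E x); last by rewrite sumr_ge0 // => q _; rewrite ler0n.
have /hasP[q q_in Fqx] := E_cover x Ex.
rewrite (big_rem q q_in) /= Fqx lerDl sumr_ge0 // => ? _; exact: ler0n.
Qed.

End Probability.

Section LogLipschitz.
Variables (R : realType) (n : nat) (alpha : R) (D : cube n -> R).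
Hypotheses (alpha_ge1 : 1 <= alpha) (D_lip : log_lipschitz alpha D) (D_distr : is_distr D).
Implicit Types (i : 'I_n) (v x z : cube n) (s : seq 'I_n) (pi : seq ('I_n * bool)).

Let alpha_ge0 : 0 <= alpha. Proof. exact: le_trans ler01 alpha_ge1. Qed.

Let D_ge0 x : 0 <= D x. Proof. exact: D_distr.1. Qed.

Lemma log_lipschitz_flip i x : D x <= alpha * D (flip i x).
Proof.
have [D_gt0 D_ln] := D_lip; have alpha_gt0 := lt_le_trans ltr01 alpha_ge1.
have := le_trans (ler_norm _) (D_ln x (flip i x) (hamming_flip i x)).
by rewrite -ler_ln ?posrE ?mulr_gt0 // lnM ?posrE //; lra.
Qed.

Definition mismatch_gf v s (t : R) := \sum_x D x * t ^+ mismatch v x s.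

Lemma mismatch_gf_nil v t : mismatch_gf v [::] t = 1.
Proof. by rewrite -D_distr.2; apply: eq_bigr => x _; rewrite expr0 mulr1. Qed.

Lemma mismatch_gf_cons v i s t : i \notin s ->
  mismatch_gf v (i :: s) t
  = \sum_(x : cube n | x i == v i) t ^+ mismatch v x s * (D x + t * D (flip i x)).
Proof.
move=> i_notin; rewrite /mismatch_gf (sum_flip_pairs _ i (v i)).
apply: eq_bigr => x /eqP xi.
have mis_x : mismatch v x (i :: s) = mismatch v x s by rewrite /mismatch /= xi eqxx.
have mis_flip : mismatch v (flip i x) (i :: s) = (mismatch v x s).+1.
  by rewrite /mismatch /= flip_at xi -/(mismatch _ _ s) mismatch_flip //; case: (v i).
by rewrite mis_x mis_flip exprS; ring.
Qed.

Lemma mismatch_gf_pairs v i s t : i \notin s ->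
  mismatch_gf v s t
  = \sum_(x : cube n | x i == v i) t ^+ mismatch v x s * (D x + D (flip i x)).
Proof.
move=> i_notin; rewrite /mismatch_gf (sum_flip_pairs _ i (v i)).
by apply: eq_bigr => x _; rewrite mismatch_flip //; ring.
Qed.

Lemma mismatch_gf_cons_bounds v i s t : i \notin s -> 0 <= t <= 1 ->
  (1 + alpha * t) / (1 + alpha) * mismatch_gf v s t <= mismatch_gf v (i :: s) t
    <= (alpha + t) / (1 + alpha) * mismatch_gf v s t.
Proof.
move=> i_notin t01; have t_ge0 : 0 <= t by case/andP: t01.
have flip_le x : D (flip i x) <= alpha * D x.
  by rewrite -{2}(flipK i x); exact: log_lipschitz_flip.
have mix x := pair_mix_bounds alpha_ge1 (D_ge0 x) (D_ge0 (flip i x))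
  (log_lipschitz_flip i x) (flip_le x) t01.
rewrite mismatch_gf_cons // (mismatch_gf_pairs _ _ i_notin) !mulr_sumr.
by apply/andP; split; apply: ler_sum => x _; rewrite mulrCA ler_wpM2l ?exprn_ge0 //;
  case/andP: (mix x).
Qed.

Lemma mismatch_gf_ge v s t : uniq s -> 0 <= t <= 1 ->
  ((1 + alpha * t) / (1 + alpha)) ^+ size s <= mismatch_gf v s t.
Proof.
move=> + t01; have t_ge0 : 0 <= t by case/andP: t01.
elim: s => [|i s IH] /=; first by rewrite mismatch_gf_nil.
case/andP=> i_notin s_uniq; have /andP[gf_ge _] := mismatch_gf_cons_bounds v i_notin t01.
apply: le_trans gf_ge; rewrite exprS ler_wpM2l ?IH //.
by rewrite divr_ge0 ?addr_ge0 ?mulr_ge0.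
Qed.

Lemma mismatch_gf_le v s t : uniq s -> 0 <= t <= 1 ->
  mismatch_gf v s t <= ((alpha + t) / (1 + alpha)) ^+ size s.
Proof.
move=> + t01; have t_ge0 : 0 <= t by case/andP: t01.
elim: s => [|i s IH] /=; first by rewrite mismatch_gf_nil.
case/andP=> i_notin s_uniq; have /andP[_ gf_le] := mismatch_gf_cons_bounds v i_notin t01.
apply: le_trans gf_le _; rewrite exprS ler_wpM2l ?IH //.
by rewrite divr_ge0 ?addr_ge0.
Qed.

Lemma prob_subcube_ge pi z :
  sat pi z -> ((1 + alpha)^-1) ^+ size (lit_vars pi) <= prob D (sat pi).
Proof.
move=> z_sat; have gf0 : mismatch_gf z (lit_vars pi) 0 = prob D (sat pi).
  rewrite /mismatch_gf probE; apply: eq_bigr => x _.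
  by rewrite expr0n (sat_mismatch _ z_sat) mulrC.
have t01 : 0 <= (0 : R) <= 1 by rewrite lexx ler01.
by have := mismatch_gf_ge z (undup_uniq (map fst pi)) t01; rewrite mulr0 addr0 div1r gf0.
Qed.

Lemma prob_subcube_nbhd_le pi z : (0 < n)%N -> sat pi z ->
  prob D (hamming_nbhd (sat pi) (log2 (n%:R : R)))
    <= n%:R * ((alpha + 2^-1) / (1 + alpha)) ^+ size (lit_vars pi).
Proof.
move=> n_gt0 z_sat; set K := lit_vars pi.
apply: (@le_trans _ _ (n%:R * mismatch_gf z K 2^-1)); last first.
  by rewrite ler_wpM2l ?ler0n // mismatch_gf_le ?undup_uniq //; apply/andP; split; lra.
rewrite probE /mismatch_gf mulr_sumr; apply: ler_sum => x _.
case: (boolP (hamming_nbhd _ _ x)) => [/existsP[y /andP[y_sat xy_near]] | _]; last first.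
  by rewrite mul0r mulr_ge0 ?ler0n // mulr_ge0 // exprn_ge0 // invr_ge0 ler0n.
have y_mis : mismatch z y K = 0%N by apply/eqP; rewrite -sat_mismatch.
rewrite (mismatch_rebase x y_mis) mul1r mulrCA ler_peMr // exprVn.
rewrite ler_pdivlMr ?mul1r ?exprn_gt0 //; apply: pow2_le_of_le_log2; first by rewrite ltr0n.
by apply: le_trans xy_near; rewrite ler_nat mismatch_le_hamming ?undup_uniq.
Qed.

Section Cells.
Variables c h : dtree n.

Definition cell (p q : seq ('I_n * bool) * bool) : pred (cube n) :=
  [pred z | (p.2 != q.2) && sat (p.1 ++ q.1) z].

Lemma prob_cell_nbhd_lt p q (M : nat) (theta : R) :
  (0 < n)%N -> p \in dt_paths c -> q \in dt_paths h ->
  ((alpha + 2^-1) / (1 + alpha)) ^+ M <= (1 + alpha)^-1 -> 0 < theta ->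
  prob D [pred x | dt_eval h x != dt_eval c x] < theta ^+ M ->
  prob D (hamming_nbhd (cell p q) (log2 (n%:R : R))) < n%:R * theta.
Proof.
move=> n_gt0 p_in q_in uM theta_gt0 err_lt.
case: (pickP (cell p q)) => [z /andP[pq_neq z_sat] | cell0]; last first.
  rewrite /prob big_pred0 ?mulr_gt0 ?ltr0n // => x.
  by apply/existsP => -[y /andP[]]; rewrite cell0.
set pi := p.1 ++ q.1 in z_sat; set u := (alpha + 2^-1) / (1 + alpha).
have cell_err x : sat pi x -> dt_eval h x != dt_eval c x.
  rewrite /sat all_cat => /andP[x_p x_q].
  by rewrite (dt_paths_sound q_in x_q) (dt_paths_sound p_in x_p) eq_sym.
have err_ge := le_trans (prob_subcube_ge z_sat) (le_prob D_ge0 cell_err).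
have nbhd_sub x : hamming_nbhd (cell p q) (log2 (n%:R : R)) x ->
                  hamming_nbhd (sat pi) (log2 (n%:R : R)) x.
  by case/existsP=> y /andP[/andP[_ y_sat] xy_near]; apply/existsP; exists y; rewrite y_sat.
have u_ge0 : 0 <= u by rewrite divr_ge0 ?addr_ge0 // invr_ge0 ler0n.
have uK_lt : u ^+ size (lit_vars pi) < theta.
  rewrite ltNge; apply/negP => theta_le; move: err_lt; rewrite ltNge => /negP; apply.
  apply: le_trans err_ge; apply: (@le_trans _ _ ((u ^+ size (lit_vars pi)) ^+ M)).
    by rewrite lerXn2r // nnegrE ?exprn_ge0 // ltW.
  by rewrite -exprM mulnC exprM lerXn2r // nnegrE ?exprn_ge0 // invr_ge0 addr_ge0.
apply: le_lt_trans (le_trans (le_prob D_ge0 nbhd_sub) (prob_subcube_nbhd_le n_gt0 z_sat)) _.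
by rewrite ltr_pM2l ?ltr0n.
Qed.

Lemma robust_risk_lt_cells (rho b : R) : 0 <= b ->
  (forall p q, p \in dt_paths c -> q \in dt_paths h ->
     prob D (hamming_nbhd (cell p q) rho) < b) ->
  robust_risk D rho c h < (dt_size c * dt_size h)%:R * b.
Proof.
move=> b_ge0 cell_lt; set s := [seq (p, q) | p <- dt_paths c, q <- dt_paths h].
have risk_le :
    robust_risk D rho c h <= \sum_(pq <- s) prob D (hamming_nbhd (cell pq.1 pq.2) rho).
  apply: (prob_le_sum D_ge0) => x /existsP[z /andP[xz_near cz_neq]].
  have [p p_in p_sat] := dt_paths_complete c z.
  have [q q_in q_sat] := dt_paths_complete h z.
  apply/hasP; exists (p, q); first exact: allpairs_f.
  apply/existsP; exists z; rewrite /= xz_near andbT; apply/andP; split.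
    by rewrite -(dt_paths_sound p_in p_sat) -(dt_paths_sound q_in q_sat).
  by rewrite /sat all_cat; apply/andP.
have [/andP[c_gt0 c_le] /andP[h_gt0 h_le]] := (size_dt_paths c, size_dt_paths h).
apply: le_lt_trans risk_le (lt_le_trans (sumr_lt_size _ _) _).
- by rewrite size_allpairs muln_gt0 c_gt0.
- by move=> _ /allpairsP[[p q] [/= p_in q_in ->]]; exact: cell_lt.
- by rewrite ler_wpM2r // ler_nat size_allpairs leq_mul.
Qed.

End Cells.
End LogLipschitz.

Unset Implicit Arguments.

Theorem theorem5p8 (R : realType) (alpha : R) (halpha : 1 <= alpha) :
  exists (d : nat) (a : {ffun 'I_d * 'I_d * 'I_d -> R}),
    (forall (m n : nat) (eps : R), (0 < m)%N -> (0 < n)%N -> 0 < eps < 2^-1 ->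
        0 < poly3 a (m%:R^-1) (n%:R^-1) eps) /\
    forall (n m : nat) (c h : dtree n) (D : cube n -> R),
      (0 < n)%N ->
      (dt_size c + dt_size h <= m)%N ->
      is_distr D ->
      log_lipschitz alpha D ->
      forall eps : R, 0 < eps < 2^-1 ->
        prob D [pred x | dt_eval h x != dt_eval c x]
          < poly3 a (m%:R^-1) (n%:R^-1) eps ->
        robust_risk D (log2 (n%:R)) c h < eps.
Proof.
have alpha1_gt0 : 0 < 1 + alpha by lra.
have [M uM] : exists M, ((alpha + 2^-1) / (1 + alpha)) ^+ M <= (1 + alpha)^-1.
  apply: exists_expr_le; last by rewrite invr_gt0.
  by rewrite divr_ge0 ?ltr_pdivrMr //; lra.
pose t0 : 'I_(2 * M).+1 * 'I_(2 * M).+1 * 'I_(2 * M).+1 := (inord (2 * M), inord M, inord M).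
exists (2 * M).+1, [ffun t => (t == t0)%:R].
have polyE x y z : poly3 [ffun t => (t == t0)%:R] x y z = (x ^+ 2 * y * z) ^+ M.
  by rewrite poly3_monomial /= !inordK ?ltnS ?leq_pmull // exprM -!exprMn.
split=> [m n eps m_gt0 n_gt0 /andP[eps_gt0 _] |
         n m c h D n_gt0 size_le D_distr D_lip eps /andP[eps_gt0 _] err_lt].
  by rewrite polyE exprn_gt0 // !mulr_gt0 // ?exprn_gt0 // invr_gt0 ltr0n.
have m_gt0 : (0 < m)%N by apply: leq_trans size_le; rewrite addn_gt0; case: (c).
set theta := m%:R^-1 ^+ 2 * n%:R^-1 * eps.
have theta_gt0 : 0 < theta by rewrite !mulr_gt0 ?exprn_gt0 // invr_gt0 ltr0n.
rewrite polyE -/theta in err_lt.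
have nb_ge0 : 0 <= n%:R * theta by rewrite mulr_ge0 // ltW.
apply: lt_le_trans (robust_risk_lt_cells D_distr nb_ge0 _) _.
  move=> p q p_in q_in.
  exact (prob_cell_nbhd_lt halpha D_lip D_distr n_gt0 p_in q_in uM theta_gt0 err_lt).
have sizes_le : ((dt_size c * dt_size h)%:R : R) <= m%:R ^+ 2.
  by rewrite -natrX ler_nat leq_mul // (leq_trans _ size_le) ?leq_addr ?leq_addl.
have m_neq0 : (m%:R : R) != 0 by rewrite pnatr_eq0 -lt0n.
have n_neq0 : (n%:R : R) != 0 by rewrite pnatr_eq0 -lt0n.
have total : m%:R ^+ 2 * (n%:R * theta) = eps by rewrite /theta; field; rewrite m_neq0 n_neq0.
by rewrite -total; apply: ler_wpM2r.
Qed.
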